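(* For $\kappa>0$ set $r_0(\kappa)=\sqrt{\kappa+1}-\sqrt{\kappa}$, $$\mu_0(\kappa)=\frac{1+\sqrt{\kappa}-\sqrt{1+\kappa}}{1-\sqrt{\kappa}+\sqrt{1+\kappa}},\qquad t_\kappa(r)=\int_{r_0(\kappa)}^{r}\frac{2\,du}{\sqrt{4\kappa u^2-(1-u^2)^2}}\ \ (r_0(\kappa)\le r<1),$$ and for $z=x+{\rm i}y$ with $x\in\mathbb{R}$, $0<y<1$, set $t_\kappa(x,y)=t_\kappa\big(|g^{-1}(\mu_0(\kappa)z)|\big)$, where $g^{-1}(w)=\frac{{\rm i}-w}{{\rm i}+w}$ (this is defined for all sufficiently small $\kappa$, depending on $(x,y)$). Then for each fixed $(x,y)$, as $\kappa\to0^+$, $$t_\kappa(x,y)=\arccos y+\frac{\kappa}{4}\Big(\frac{x^2y}{\sqrt{1-y^2}}-\arccos y\Big)+o(\kappa).$$ Consequently the graphs $\Phi_\kappa(x,y)=(x,y,t_\kappa(x,y))$ converge to $\Phi_0(x,y)=(x,y,\arccos y)$, which parametrizes half of a parabolic catenoid in $\mathfrak{H}\times\mathbb{R}$, and the normal component of $\frac{d\Phi_\kappa}{d\kappa}\big|_{\kappa=0}$ with respect to the unit normal $\nu=(0,-y^2,-\sqrt{1-y^2})$ is $$w(x,y)=\tfrac14\big(\sqrt{1-y^2}\,\arccos y-x^2y\big).$$ In the parametrization $\widehat F(x,t)=(x,\cos t,t)$, $(x,t)\in\mathbb{R}\times(-\pi/2,\pi/2)$, of the full parabolic catenoid, this Jacobi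 field is $w(x,t)=\frac14(t\sin t-x^2\cos t)$, and it satisfies the Jacobi equation $(\partial_x^2+\partial_t^2+1)w=0$; equivalently, on the parametrization $(x,t)\mapsto(x,\sin t,t)$, $t\in(0,\pi)$, the corresponding Jacobi field is $\frac18\big((\pi-2t)\cos t-2x^2\sin t\big)$.
   Context: $\mathfrak{H}=\{x+{\rm i}y:y>0\}$ with metric $\frac{dx^2+dy^2}{y^2}$ and $\mathbb{D}=\{|z|<1\}$ with metric $\frac{4|dz|^2}{(1-|z|^2)^2}$ are models of $\mathbb{H}^2$, related by the isometry $g(z)={\rm i}\frac{1-z}{1+z}$; $\mathfrak{H}\times\mathbb{R}$ has the product metric with $dt^2$. For each $\kappa>0$, $r\mapsto t_\kappa(r)$, $r\in[r_0(\kappa),1)$, describes (as $t=\pm t_\kappa(|z|)$ over the annulus $r_0\le|z|<1$ in $\mathbb{D}$) the minimal catenoid of revolution in $\mathbb{H}^2\times\mathbb{R}$ with neck radius (Euclidean, in $\mathbb{D}$) $r_0(\kappa)$, and $(x,y)\mapsto(x,y,t_\kappa(x,y))$ is the upper half of the image of this catenoid under $g$ followed by the hyperbolic dilation $z\mapsto z/\mu_0(\kappa)$ of $\mathfrak{H}$. *)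

From Stdlib Require Import Reals Lra ClassicalEpsilon.
Open Scope R_scope.

Definition r0 (k : R) : R := sqrt (k + 1) - sqrt k.

Definition mu0 (k : R) : R :=
  (1 + sqrt k - sqrt (1 + k)) / (1 - sqrt k + sqrt (1 + k)).

Definition integrand (k : R) (u : R) : R :=
  2 / sqrt (4 * k * u ^ 2 - (1 - u ^ 2) ^ 2).

Definition improper_int_left (f : R -> R) (a b I : R) : Prop :=
  a < b /\
  forall eps, 0 < eps -> exists delta, 0 < delta /\
    forall a', a < a' < a + delta -> a' < b ->
      exists pr : Riemann_integrable f a' b, Rabs (RiemannInt pr - I) < eps.

(* t_kappa(r) = int_{r0(kappa)}^r 2 du / sqrt(4 kappa u^2 - (1-u^2)^2);
   equals 0 for r <= r0(kappa) (the integral over a degenerate interval),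
   and otherwise is the (unique, when it exists) improper integral. *)
Definition t_kappa (k r : R) : R :=
  match Rlt_dec (r0 k) r with
  | left _ => epsilon (inhabits 0) (fun I => improper_int_left (integrand k) (r0 k) r I)
  | right _ => 0
  end.

(* |g^{-1}(w)| for w = a + i b, where g^{-1}(w) = (i - w)/(i + w):
   |i - w|^2 = a^2 + (1-b)^2, |i + w|^2 = a^2 + (1+b)^2. *)
Definition ginv_abs (a b : R) : R :=
  sqrt ((a ^ 2 + (1 - b) ^ 2) / (a ^ 2 + (1 + b) ^ 2)).

Definition t_kappa_xy (k x y : R) : R :=
  t_kappa k (ginv_abs (mu0 k * x) (mu0 k * y)).

Definition coeff1 (x y : R) : R :=
  / 4 * (x ^ 2 * y / sqrt (1 - y ^ 2) - acos y).

(* product metric of H x R at a point with height y: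
   ((a1 b1 + a2 b2)/y^2) + a3 b3 *)
Definition hmetric (y : R) (a b : R * R * R) : R :=
  let '(a1, a2, a3) := a in let '(b1, b2, b3) := b in
  (a1 * b1 + a2 * b2) / y ^ 2 + a3 * b3.

Definition nu (y : R) : R * R * R := (0, - y ^ 2, - sqrt (1 - y ^ 2)).

Definition w_xy (x y : R) : R := / 4 * (sqrt (1 - y ^ 2) * acos y - x ^ 2 * y).

(* Jacobi field in the parametrization F(x,t) = (x, cos t, t) *)
Definition w_xt (x t : R) : R := / 4 * (t * sin t - x ^ 2 * cos t).

(* Jacobi field in the parametrization (x, sin t, t), t in (0, pi) *)
Definition w_sin (x t : R) : R := / 8 * ((PI - 2 * t) * cos t - 2 * x ^ 2 * sin t).

From Stdlib Require Import Reals Lra Psatz ClassicalEpsilon.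
From Coquelicot Require Import Coquelicot.
Open Scope R_scope.

(* The substitution cos p = (1/u - u) / (2 sqrt kappa) turns t_kappa(r) into the
   integral of 1 / sqrt (1 + kappa cos^2) from 0 to arccos of that quotient, an
   integrand that is 1 - kappa/2 cos^2 up to O(kappa^2).  Hence
   t_kappa(x,y) = p - kappa/4 (p + sin p cos p) + O(kappa^2) with
   p = arccos q(kappa), where q(kappa), the value of the substitution at
   |g^{-1}(mu_0 z)|, is smooth in kappa with q(0) = y; differentiating at
   kappa = 0 gives the first-order coefficient. *)

(** * Limits at 0 from the right *)

Definition near_0_right (P : R -> Prop) : Prop :=
  exists d, 0 < d /\ forall k, 0 < k < d -> P k.

Lemma near_0_right_and (P Q : R -> Prop) :
  near_0_right P -> near_0_right Q -> near_0_right (fun k => P k /\ Q k).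
Proof.
  intros [d1 [Hd1 HP]] [d2 [Hd2 HQ]].
  exists (Rmin d1 d2). split; [now apply Rmin_glb_lt|].
  intros k [Hk Hkd].
  split; [apply HP | apply HQ]; split; try lra.
  - apply Rlt_le_trans with (1 := Hkd), Rmin_l.
  - apply Rlt_le_trans with (1 := Hkd), Rmin_r.
Qed.

Lemma near_0_right_lt c : 0 < c -> near_0_right (fun k => k < c).
Proof. intros Hc. exists c. split; [lra | tauto]. Qed.

Lemma near_0_right_impl (P Q : R -> Prop) :
  (forall k, 0 < k -> P k -> Q k) -> near_0_right P -> near_0_right Q.
Proof.
  intros HPQ [d [Hd HP]]. exists d. split; [lra|].
  intros k Hk. apply HPQ, HP; tauto.
Qed.

Lemma continuity_pt_near f a l h :
  continuity_pt f a -> l < f a < h ->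
  exists d, 0 < d /\ forall u, Rabs (u - a) < d -> l < f u < h.
Proof.
  intros Hf Hlh.
  destruct (Hf (Rmin (f a - l) (h - f a))) as [d [Hd Hnear]].
  { apply Rmin_glb_lt; lra. }
  exists d. split; [lra|]. intros u Hu.
  destruct (Req_dec u a) as [->|Hua]; [lra|].
  assert (Hfu : Rabs (f u - f a) < Rmin (f a - l) (h - f a)).
  { apply (Hnear u). split; [split; [exact I | congruence] | exact Hu]. }
  pose proof (Rmin_l (f a - l) (h - f a)). pose proof (Rmin_r (f a - l) (h - f a)).
  apply Rabs_def2 in Hfu. lra.
Qed.

Lemma is_derive_little_o f l :
  is_derive f 0 l -> forall eps, 0 < eps ->
  near_0_right (fun h => Rabs (f h - f 0 - l * h) <= eps * h).
Proof.
  intros Hd eps Heps. apply is_derive_Reals in Hd.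
  destruct (Hd eps Heps) as [d Hquot].
  exists d. split; [apply cond_pos|]. intros h Hh.
  assert (Hh0 : h <> 0) by lra.
  assert (Hhd : Rabs h < d) by (rewrite Rabs_pos_eq; lra).
  specialize (Hquot h Hh0 Hhd). rewrite Rplus_0_l in Hquot.
  replace (f h - f 0 - l * h) with (h * ((f h - f 0) / h - l)) by (field; lra).
  rewrite Rabs_mult, (Rabs_pos_eq h) by lra. nra.
Qed.

Section FirstOrder.

Variables (f : R -> R) (a c : R).

Hypothesis f_expansion : forall eps, 0 < eps ->
  near_0_right (fun k => Rabs (f k - (a + k * c)) <= eps * k).

Lemma first_order_limit eps : 0 < eps -> near_0_right (fun k => Rabs (f k - a) < eps).
Proof.
  intros Heps. set (C := Rabs c + 1).
  assert (HC : 0 < C) by (unfold C; pose proof (Rabs_pos c); lra).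
  apply (near_0_right_impl (fun k => Rabs (f k - (a + k * c)) <= 1 * k /\ k < eps / C)).
  2: { apply near_0_right_and; [apply f_expansion; lra | apply near_0_right_lt].
       now apply Rdiv_lt_0_compat. }
  intros k Hk [Hf Hkc].
  assert (HkC : k * C < eps).
  { apply Rmult_lt_reg_r with (/ C); [now apply Rinv_0_lt_compat|].
    rewrite Rmult_assoc, Rinv_r, Rmult_1_r by lra. exact Hkc. }
  assert (Rabs (k * c) = k * Rabs c) by (rewrite Rabs_mult, Rabs_pos_eq; lra).
  replace (f k - a) with ((f k - (a + k * c)) + k * c) by ring.
  eapply Rle_lt_trans; [apply Rabs_triang|]. unfold C in HkC. lra.
Qed.

Lemma first_order_quotient eps :
  0 < eps -> near_0_right (fun k => Rabs ((f k - a) / k - c) < eps).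
Proof.
  intros Heps. eapply near_0_right_impl; [|apply (f_expansion (eps / 2)); lra].
  intros k Hk Hf.
  replace ((f k - a) / k - c) with ((f k - (a + k * c)) / k) by (field; lra).
  unfold Rdiv. rewrite Rabs_mult, (Rabs_pos_eq (/ k)) by (left; now apply Rinv_0_lt_compat).
  apply Rle_lt_trans with (eps / 2 * k * / k).
  - apply Rmult_le_compat_r; [left; now apply Rinv_0_lt_compat | exact Hf].
  - field_simplify; lra.
Qed.

End FirstOrder.

Lemma is_derive_acos q : -1 < q < 1 -> is_derive acos q (-1 / sqrt (1 - q ^ 2)).
Proof.
  intros Hq. apply is_derive_Reals.
  apply derive_pt_eq_1 with (derivable_pt_acos q Hq).
  rewrite derive_pt_acos. unfold Rsqr. f_equal. f_equal. ring.
Qed.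

Lemma acos_lt q e : 0 < e <= PI -> cos e < q <= 1 -> acos q < e.
Proof.
  intros He Hq. destruct (Rlt_or_le (acos q) e) as [|Hle]; [assumption|].
  pose proof (acos_bound q). pose proof (COS_bound e).
  assert (cos (acos q) <= cos e).
  { destruct Hle as [Hlt|<-]; [|lra]. left. apply cos_decreasing_1; lra. }
  rewrite cos_acos in * by lra. lra.
Qed.

Lemma acos_in_half_pi y : 0 < y < 1 -> 0 < acos y < PI / 2.
Proof.
  intros Hy. pose proof (acos_bound_lt y ltac:(lra)) as Hb.
  pose proof (cos_acos y ltac:(lra)) as Hc.
  split; [lra|].
  destruct (Rlt_or_le (acos y) (PI / 2)) as [|Hl]; [assumption|].
  pose proof (cos_le_0 (acos y) Hl ltac:(lra)). lra.
Qed.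

(** * The integral of 1 / sqrt (1 + kappa cos^2) *)

Definition ell_integrand k p := / sqrt (1 + k * cos p ^ 2).

Definition ellE k p := RInt (ell_integrand k) 0 p.

Definition ellE_lin k p := p - k / 4 * (p + sin p * cos p).

Lemma continuous_ell_integrand k p : 0 <= k -> continuous (ell_integrand k) p.
Proof.
  intros Hk. apply (@ex_derive_continuous R_AbsRing R_NormedModule).
  unfold ell_integrand. auto_derive.
  assert (0 <= cos p * cos p) by nra.
  split; [nra|]. split; [|easy]. apply Rgt_not_eq, sqrt_lt_R0; nra.
Qed.

Lemma is_RInt_ellE k p : 0 <= k -> is_RInt (ell_integrand k) 0 p (ellE k p).
Proof.
  intros Hk. apply (@RInt_correct R_CompleteNormedModule), ex_RInt_continuous.
  intros; now apply continuous_ell_integrand.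
Qed.

Lemma is_derive_ellE k p : 0 <= k -> is_derive (ellE k) p (ell_integrand k p).
Proof.
  intros Hk. apply is_derive_RInt with (a := 0).
  - apply filter_forall. intros; now apply is_RInt_ellE.
  - now apply continuous_ell_integrand.
Qed.

Lemma ell_integrand_bounds k p : 0 <= k -> 0 <= ell_integrand k p <= 1.
Proof.
  intros Hk. unfold ell_integrand. assert (0 <= cos p ^ 2) by nra.
  assert (1 <= sqrt (1 + k * cos p ^ 2)).
  { rewrite <- sqrt_1 at 1. apply sqrt_le_1_alt. nra. }
  split; [left; apply Rinv_0_lt_compat; lra|].
  apply Rle_trans with (/ 1); [apply Rinv_le_contravar | rewrite Rinv_1]; lra.
Qed.

Lemma Rabs_ellE_le k p : 0 <= k -> 0 <= p -> Rabs (ellE k p) <= p.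
Proof.
  intros Hk Hp. unfold ellE.
  replace p with ((p - 0) * 1) at 2 by ring.
  apply abs_RInt_le_const; [lra | eexists; now apply is_RInt_ellE|].
  intros t _. pose proof (ell_integrand_bounds k t Hk). rewrite Rabs_pos_eq; lra.
Qed.

Lemma is_derive_ellE_lin k p : is_derive (ellE_lin k) p (1 - k / 2 * cos p ^ 2).
Proof.
  unfold ellE_lin. auto_derive; [easy|].
  pose proof (sin2_cos2 p) as Hsc. unfold Rsqr in Hsc.
  replace (sin p * (1 * - sin p)) with (cos p * cos p - 1) by lra.
  change (AbsRing.sort R_AbsRing) with R in p. field.
Qed.

Lemma ell_integrand_expansion k p :
  0 <= k <= 1 -> Rabs (ell_integrand k p - (1 - k / 2 * cos p ^ 2)) <= k ^ 2.
Proof.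
  intros Hk. unfold ell_integrand. set (c := cos p ^ 2).
  assert (Hc : 0 <= c <= 1) by (unfold c; pose proof (COS_bound p); nra).
  set (w := sqrt (1 + k * c)).
  assert (Hw2 : w * w = 1 + k * c) by (apply sqrt_sqrt; nra).
  assert (Hw1 : 1 <= w) by (unfold w; rewrite <- sqrt_1 at 1; apply sqrt_le_1_alt; nra).
  (* 1/w - (1 - (w^2 - 1)/2) = (w - 1)^2 (w + 2) / (2 w), and 2 (w - 1) <= w^2 - 1 <= k *)
  assert (Hid : / w - (1 - k / 2 * c) = (w - 1) ^ 2 * (w + 2) / (2 * w)).
  { replace (k / 2 * c) with ((w * w - 1) / 2) by (rewrite Hw2; field). field. lra. }
  rewrite Hid, Rabs_pos_eq.
  2: { apply Rmult_le_pos; [apply Rmult_le_pos; [apply pow2_ge_0 | lra]|].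
       left; apply Rinv_0_lt_compat; lra. }
  assert (Hw : (w - 1) * 2 <= k) by nra.
  assert (Hk4 : (w - 1) ^ 2 * 4 <= k ^ 2) by nra.
  apply Rmult_le_reg_r with (2 * w); [lra|].
  unfold Rdiv. rewrite Rmult_assoc, Rinv_l, Rmult_1_r by lra.
  pose proof (pow2_ge_0 (w - 1)). nra.
Qed.

Lemma ellE_lin_error k p : 0 <= k <= 1 -> 0 <= p -> Rabs (ellE k p - ellE_lin k p) <= k ^ 2 * p.
Proof.
  intros Hk Hp.
  assert (Hlin : is_RInt (fun q => 1 - k / 2 * cos q ^ 2) 0 p
                   (minus (ellE_lin k p) (ellE_lin k 0))).
  { apply (@is_RInt_derive R_CompleteNormedModule); intros; [apply is_derive_ellE_lin|].
    apply (@ex_derive_continuous R_AbsRing R_NormedModule). auto_derive; auto. }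
  assert (Hlin0 : ellE_lin k 0 = 0) by (unfold ellE_lin; rewrite sin_0, cos_0; ring).
  assert (Hdiff := is_RInt_minus _ _ _ _ _ _ (is_RInt_ellE k p ltac:(lra)) Hlin).
  rewrite Hlin0 in Hdiff.
  replace (ellE k p - ellE_lin k p)
    with (RInt (fun q => minus (ell_integrand k q) (1 - k / 2 * cos q ^ 2)) 0 p).
  2: { apply is_RInt_unique. unfold minus, plus, opp in *; simpl in *.
       replace (ellE k p - ellE_lin k p) with (ellE k p + - (ellE_lin k p + - 0)) by ring.
       exact Hdiff. }
  replace (k ^ 2 * p) with ((p - 0) * k ^ 2) by ring.
  apply abs_RInt_le_const; [lra | eexists; exact Hdiff|].
  intros q _. now apply ell_integrand_expansion.
Qed.

(** * The substitution *)

Definition subst_q k u := (/ u - u) / (2 * sqrt k).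

Definition t_prim k u := ellE k (acos (subst_q k u)).

Lemma r0_pos k : 0 < k -> 0 < r0 k.
Proof. intros Hk. unfold r0. pose proof (sqrt_lt_1_alt k (k + 1) ltac:(lra)). lra. Qed.

Lemma r0_mul_conj k : 0 < k -> r0 k * (sqrt (k + 1) + sqrt k) = 1.
Proof.
  intros Hk. unfold r0.
  assert (sqrt k * sqrt k = k) by (apply sqrt_sqrt; lra).
  assert (sqrt (k + 1) * sqrt (k + 1) = k + 1) by (apply sqrt_sqrt; lra).
  nra.
Qed.

Lemma subst_q_r0 k : 0 < k -> subst_q k (r0 k) = 1.
Proof.
  intros Hk. pose proof (r0_pos k Hk). pose proof (r0_mul_conj k Hk).
  pose proof (sqrt_lt_R0 k Hk).
  assert (Hinv : / r0 k = sqrt (k + 1) + sqrt k)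
    by (apply Rmult_eq_reg_l with (r0 k); [rewrite Rinv_r|]; lra).
  unfold subst_q. rewrite Hinv. unfold r0. field. lra.
Qed.

Lemma subst_q_range k u :
  0 < k -> r0 k < u < 1 -> 0 < 4 * k * u ^ 2 - (1 - u ^ 2) ^ 2 /\ 0 < subst_q k u < 1.
Proof.
  intros Hk Hu. pose proof (r0_pos k Hk). pose proof (r0_mul_conj k Hk).
  assert (Hs : sqrt k * sqrt k = k) by (apply sqrt_sqrt; lra).
  assert (HA : sqrt (k + 1) * sqrt (k + 1) = k + 1) by (apply sqrt_sqrt; lra).
  assert (Hs0 : 0 < sqrt k) by (apply sqrt_lt_R0; lra).
  unfold r0 in *. set (s := sqrt k) in *. set (A := sqrt (k + 1)) in *.
  (* r0 and 1/r0 are the positive roots of u^2 + 2 s u - 1 and 1 + 2 s u - u^2 *)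
  assert (F1 : 0 < u * u + 2 * s * u - 1) by nra.
  assert (F2 : 0 < 1 + 2 * s * u - u * u) by nra.
  split.
  { replace (4 * k * u ^ 2 - (1 - u ^ 2) ^ 2)
      with ((u * u + 2 * s * u - 1) * (1 + 2 * s * u - u * u)) by (rewrite <- Hs; ring).
    nra. }
  unfold subst_q. fold s.
  replace ((/ u - u) / (2 * s)) with ((1 - u * u) / (2 * s * u)) by (field; lra).
  split.
  - apply Rdiv_lt_0_compat; nra.
  - apply Rmult_lt_reg_r with (2 * s * u); [nra|].
    unfold Rdiv. rewrite Rmult_assoc, Rinv_l by nra. nra.
Qed.

Lemma r0_lt_of_subst_q_lt_1 k u : 0 < k -> 0 < u -> subst_q k u < 1 -> r0 k < u.
Proof.
  intros Hk Hu Hq. pose proof (r0_pos k Hk). pose proof (sqrt_lt_R0 k Hk).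
  destruct (Rlt_or_le (r0 k) u) as [|Hle]; [assumption|].
  assert (subst_q k (r0 k) <= subst_q k u).
  { unfold subst_q, Rdiv. apply Rmult_le_compat_r; [left; apply Rinv_0_lt_compat; lra|].
    assert (/ r0 k <= / u) by (apply Rinv_le_contravar; lra). lra. }
  rewrite subst_q_r0 in * by lra. lra.
Qed.

Lemma continuous_integrand k u : 0 < k -> r0 k < u < 1 -> continuous (integrand k) u.
Proof.
  intros Hk Hu. destruct (subst_q_range k u Hk Hu) as [Hdisc _].
  apply (@ex_derive_continuous R_AbsRing R_NormedModule). unfold integrand.
  auto_derive. split; [nra|]. split; [|easy].
  apply Rgt_not_eq, sqrt_lt_R0; nra.
Qed.

Lemma is_derive_t_prim k u : 0 < k -> r0 k < u < 1 -> is_derive (t_prim k) u (integrand k u).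
Proof.
  intros Hk Hu. destruct (subst_q_range k u Hk Hu) as [Hdisc Hq].
  assert (Hs : sqrt k * sqrt k = k) by (apply sqrt_sqrt; lra).
  assert (Hs0 : 0 < sqrt k) by (apply sqrt_lt_R0; lra).
  assert (Hu0 : 0 < u) by (pose proof (r0_pos k Hk); lra).
  assert (Dq : is_derive (subst_q k) u ((- / u ^ 2 - 1) / (2 * sqrt k))).
  { unfold subst_q. auto_derive; [lra|]. field. lra. }
  assert (Dacos := is_derive_acos (subst_q k u) ltac:(lra)).
  assert (DE := is_derive_ellE k (acos (subst_q k u)) ltac:(lra)).
  assert (D := @is_derive_comp R_AbsRing R_NormedModule (ellE k) (fun v => acos (subst_q k v))
                 u _ _ DE (@is_derive_comp R_AbsRing R_NormedModule _ _ _ _ _ Dacos Dq)).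
  unfold t_prim. eapply is_derive_ext; [intros; reflexivity|].
  replace (integrand k u) with (scal (scal ((- / u ^ 2 - 1) / (2 * sqrt k))
    (-1 / sqrt (1 - subst_q k u ^ 2))) (ell_integrand k (acos (subst_q k u)))); [exact D|].
  unfold scal; simpl; unfold mult; simpl.
  unfold ell_integrand. rewrite cos_acos by lra.
  set (q := subst_q k u) in *. set (s := sqrt k) in *.
  assert (Hqu : q = (1 - u * u) / (2 * s * u)) by (unfold q, subst_q; fold s; field; lra).
  assert (S1 : sqrt (1 + k * q ^ 2) = (1 + u ^ 2) / (2 * u)).
  { replace (1 + k * q ^ 2) with (((1 + u ^ 2) / (2 * u)) ^ 2).
    - apply sqrt_pow2. apply Rdiv_le_0_compat; nra.
    - rewrite Hqu, <- Hs. field. lra. }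
  assert (S2 : sqrt (1 - q * (q * 1)) = sqrt (4 * k * u ^ 2 - (1 - u ^ 2) ^ 2) / (2 * s * u)).
  { replace (1 - q * (q * 1)) with ((4 * k * u ^ 2 - (1 - u ^ 2) ^ 2) / ((2 * s * u) ^ 2)).
    - rewrite sqrt_div_alt, sqrt_pow2 by nra. reflexivity.
    - rewrite Hqu, <- Hs. field. lra. }
  assert (0 < sqrt (4 * k * u ^ 2 - (1 - u ^ 2) ^ 2)) by (apply sqrt_lt_R0; lra).
  unfold integrand. rewrite S1, S2. field. repeat split; nra.
Qed.

Lemma RiemannInt_integrand k a b : 0 < k -> r0 k < a -> a < b -> b < 1 ->
  exists pr : Riemann_integrable (integrand k) a b, RiemannInt pr = t_prim k b - t_prim k a.
Proof.
  intros Hk Ha Hab Hb.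
  assert (H : is_RInt (integrand k) a b (minus (t_prim k b) (t_prim k a))).
  { apply (@is_RInt_derive R_CompleteNormedModule); intros u Hu;
      rewrite Rmin_left, Rmax_right in Hu by lra.
    - apply is_derive_t_prim; lra.
    - apply continuous_integrand; lra. }
  exists (ex_RInt_Reals_0 _ _ _ (ex_intro _ _ H)).
  rewrite <- RInt_Reals. now apply is_RInt_unique.
Qed.

Lemma improper_int_left_t_prim k r :
  0 < k -> r0 k < r < 1 -> improper_int_left (integrand k) (r0 k) r (t_prim k r).
Proof.
  intros Hk Hr. split; [lra|]. intros eps Heps.
  set (e := Rmin eps 1).
  assert (He : 0 < e <= 1) by (unfold e; split; [apply Rmin_glb_lt | apply Rmin_r]; lra).
  assert (Hepi : e <= PI) by (pose proof PI2_1; lra).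
  assert (Hcos : cos e < 1) by (rewrite <- cos_0; apply cos_decreasing_1; lra).
  assert (Hcont : continuity_pt (subst_q k) (r0 k)).
  { pose proof (r0_pos k Hk). unfold subst_q. reg. lra. }
  destruct (continuity_pt_near _ _ (cos e) 2 Hcont) as [d [Hd Hnear]].
  { rewrite subst_q_r0; lra. }
  exists d. split; [exact Hd|]. intros a Ha Har.
  destruct (RiemannInt_integrand k a r Hk ltac:(lra) Har ltac:(lra)) as [pr Hpr].
  exists pr. rewrite Hpr. replace (t_prim k r - t_prim k a - t_prim k r) with (- t_prim k a) by ring.
  rewrite Rabs_Ropp.
  assert (Hq : cos e < subst_q k a <= 1).
  { destruct (subst_q_range k a Hk ltac:(lra)) as [_ Hq].
    assert (Rabs (a - r0 k) < d) by (rewrite Rabs_pos_eq; lra).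
    specialize (Hnear a ltac:(assumption)). lra. }
  pose proof (acos_lt (subst_q k a) e ltac:(lra) Hq).
  pose proof (Rabs_ellE_le k (acos (subst_q k a)) ltac:(lra) ltac:(apply acos_bound)).
  unfold t_prim, e in *. pose proof (Rmin_l eps 1). lra.
Qed.

Lemma improper_int_left_unique f a b I J :
  improper_int_left f a b I -> improper_int_left f a b J -> I = J.
Proof.
  intros [Hab HI] [_ HJ].
  destruct (Req_dec I J) as [|Hne]; [assumption|exfalso].
  set (eps := Rabs (I - J) / 2).
  assert (Heps : 0 < eps) by (apply Rdiv_lt_0_compat; [apply Rabs_pos_lt|]; lra).
  destruct (HI eps Heps) as [d1 [Hd1 P1]]. destruct (HJ eps Heps) as [d2 [Hd2 P2]].
  set (m := Rmin (Rmin d1 d2) (b - a)).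
  assert (Hm : 0 < m) by (repeat apply Rmin_glb_lt; lra).
  assert (Hm1 : m <= d1) by (eapply Rle_trans; [apply Rmin_l | apply Rmin_l]).
  assert (Hm2 : m <= d2) by (eapply Rle_trans; [apply Rmin_l | apply Rmin_r]).
  assert (Hm3 : m <= b - a) by apply Rmin_r.
  destruct (P1 (a + m / 2) ltac:(lra) ltac:(lra)) as [pr1 Q1].
  destruct (P2 (a + m / 2) ltac:(lra) ltac:(lra)) as [pr2 Q2].
  rewrite (RiemannInt_P5 pr1 pr2) in Q1.
  assert (Rabs (I - J) <= Rabs (RiemannInt pr2 - I) + Rabs (RiemannInt pr2 - J)).
  { replace (I - J) with (- (RiemannInt pr2 - I) + (RiemannInt pr2 - J)) by ring.
    eapply Rle_trans; [apply Rabs_triang|]. rewrite Rabs_Ropp. lra. }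
  unfold eps in *. lra.
Qed.

Lemma t_kappa_t_prim k r : 0 < k -> r0 k < r < 1 -> t_kappa k r = t_prim k r.
Proof.
  intros Hk Hr. unfold t_kappa. destruct (Rlt_dec (r0 k) r) as [_|]; [|lra].
  apply (improper_int_left_unique (integrand k) (r0 k) r).
  - apply epsilon_spec. exists (t_prim k r). now apply improper_int_left_t_prim.
  - now apply improper_int_left_t_prim.
Qed.

(** * The substitution at |g^{-1}(mu_0 z)| *)

Lemma ginv_abs_range a b : 0 < b < 1 -> 0 < ginv_abs a b < 1.
Proof.
  intros Hb. unfold ginv_abs.
  assert (0 < a ^ 2 + (1 - b) ^ 2 < a ^ 2 + (1 + b) ^ 2) by nra.
  split.
  - apply sqrt_lt_R0, Rdiv_lt_0_compat; lra.
  - apply Rlt_le_trans with (sqrt 1); [|rewrite sqrt_1; lra].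
    apply sqrt_lt_1_alt. split; [apply Rdiv_le_0_compat; lra|].
    apply Rmult_lt_reg_r with (a ^ 2 + (1 + b) ^ 2); [lra|].
    unfold Rdiv. rewrite Rmult_assoc, Rinv_l by lra. lra.
Qed.

Lemma ginv_abs_inv_sub a b : 0 < b < 1 ->
  / ginv_abs a b - ginv_abs a b = 4 * b / sqrt ((1 + a ^ 2 + b ^ 2) ^ 2 - 4 * b ^ 2).
Proof.
  intros Hb. unfold ginv_abs.
  set (N := a ^ 2 + (1 - b) ^ 2). set (M := a ^ 2 + (1 + b) ^ 2).
  assert (HN : 0 < N) by (unfold N; nra).
  assert (HM : 0 < M) by (unfold M; nra).
  replace ((1 + a ^ 2 + b ^ 2) ^ 2 - 4 * b ^ 2) with (N * M) by (unfold N, M; ring).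
  replace (4 * b) with (M - N) by (unfold M, N; ring).
  rewrite sqrt_div_alt, sqrt_mult by lra.
  assert (sqrt N * sqrt N = N) by (apply sqrt_sqrt; lra).
  assert (sqrt M * sqrt M = M) by (apply sqrt_sqrt; lra).
  assert (0 < sqrt N) by (apply sqrt_lt_R0; lra).
  assert (0 < sqrt M) by (apply sqrt_lt_R0; lra).
  field_simplify; [|lra..]. nra.
Qed.

Lemma mu0_alt k : 0 < k -> mu0 k = sqrt k / (1 + sqrt (1 + k)).
Proof.
  intros Hk. assert (H1 : sqrt k * sqrt k = k) by (apply sqrt_sqrt; lra).
  assert (H2 : sqrt (1 + k) * sqrt (1 + k) = 1 + k) by (apply sqrt_sqrt; lra).
  assert (H3 : 0 < sqrt k) by (apply sqrt_lt_R0; lra).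
  assert (H4 : sqrt k < sqrt (1 + k)) by (apply sqrt_lt_1_alt; lra).
  unfold mu0. set (s := sqrt k) in *. set (A := sqrt (1 + k)) in *.
  assert ((1 + s - A) * (1 + A) = s * (1 - s + A)) by nra.
  apply Rmult_eq_reg_r with ((1 - s + A) * (1 + A)); [|nra].
  field_simplify; lra.
Qed.

(* subst_q at |g^{-1}(mu_0 z)|, written through mu_0^2 = k / (1 + sqrt (1 + k))^2 so
   that it is smooth at k = 0 *)
Definition q_xy x y k :=
  2 * y / ((1 + sqrt (1 + k)) *
    sqrt ((1 + k / (1 + sqrt (1 + k)) ^ 2 * (x ^ 2 + y ^ 2)) ^ 2
          - 4 * (k / (1 + sqrt (1 + k)) ^ 2) * y ^ 2)).

Lemma mu0_range k : 0 < k -> 0 < mu0 k < 1.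
Proof.
  intros Hk. rewrite mu0_alt by lra.
  assert (0 < sqrt k) by (apply sqrt_lt_R0; lra).
  assert (sqrt k < sqrt (1 + k)) by (apply sqrt_lt_1_alt; lra).
  split; [apply Rdiv_lt_0_compat; lra|].
  apply Rmult_lt_reg_r with (1 + sqrt (1 + k)); [lra|].
  unfold Rdiv. rewrite Rmult_assoc, Rinv_l; lra.
Qed.

Lemma subst_q_ginv_abs k x y : 0 < k -> 0 < y < 1 ->
  subst_q k (ginv_abs (mu0 k * x) (mu0 k * y)) = q_xy x y k.
Proof.
  intros Hk Hy. pose proof (mu0_range k Hk) as Hm.
  assert (Hmy : 0 < mu0 k * y < 1) by (split; nra).
  unfold subst_q. rewrite ginv_abs_inv_sub by exact Hmy.
  assert (Hdisc : 0 < (1 + (mu0 k * x) ^ 2 + (mu0 k * y) ^ 2) ^ 2 - 4 * (mu0 k * y) ^ 2).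
  { replace (_ - _) with (((mu0 k * x) ^ 2 + (1 - mu0 k * y) ^ 2)
                          * ((mu0 k * x) ^ 2 + (1 + mu0 k * y) ^ 2)) by ring.
    apply Rmult_lt_0_compat; nra. }
  assert (0 < sqrt ((1 + (mu0 k * x) ^ 2 + (mu0 k * y) ^ 2) ^ 2 - 4 * (mu0 k * y) ^ 2))
    by (apply sqrt_lt_R0; lra).
  assert (Hs : sqrt k * sqrt k = k) by (apply sqrt_sqrt; lra).
  assert (Hs0 : 0 < sqrt k) by (apply sqrt_lt_R0; lra).
  assert (0 <= sqrt (1 + k)) by apply sqrt_pos.
  rewrite mu0_alt in * by lra. unfold q_xy.
  set (A := sqrt (1 + k)) in *. set (s := sqrt k) in *.
  replace ((1 + k / (1 + A) ^ 2 * (x ^ 2 + y ^ 2)) ^ 2 - 4 * (k / (1 + A) ^ 2) * y ^ 2)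
    with ((1 + (s / (1 + A) * x) ^ 2 + (s / (1 + A) * y) ^ 2) ^ 2 - 4 * (s / (1 + A) * y) ^ 2)
    by (rewrite <- Hs; field; lra).
  field. repeat split; lra.
Qed.

Lemma t_kappa_xy_ellE k x y : 0 < k -> 0 < y < 1 -> q_xy x y k < 1 ->
  t_kappa_xy k x y = ellE k (acos (q_xy x y k)).
Proof.
  intros Hk Hy Hq. pose proof (mu0_range k Hk).
  assert (Hr := ginv_abs_range (mu0 k * x) (mu0 k * y) ltac:(split; nra)).
  assert (Hsubst := subst_q_ginv_abs k x y Hk Hy).
  unfold t_kappa_xy. set (r := ginv_abs (mu0 k * x) (mu0 k * y)) in *.
  assert (r0 k < r) by (apply r0_lt_of_subst_q_lt_1; lra).
  rewrite t_kappa_t_prim by lra. unfold t_prim. now rewrite Hsubst.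
Qed.

Lemma q_xy_0 x y : q_xy x y 0 = y.
Proof.
  unfold q_xy. rewrite Rplus_0_r, sqrt_1.
  replace ((1 + 0 / (1 + 1) ^ 2 * (x ^ 2 + y ^ 2)) ^ 2 - 4 * (0 / (1 + 1) ^ 2) * y ^ 2)
    with 1 by field.
  rewrite sqrt_1. field.
Qed.

Lemma is_derive_q_xy x y : is_derive (q_xy x y) 0 (- y * (1 + x ^ 2 - y ^ 2) / 4).
Proof.
  unfold q_xy. auto_derive;
    rewrite ?Rplus_0_r, ?sqrt_1, ?Rmult_0_l, ?Rplus_0_r, ?Rmult_0_l, ?Rminus_0_r.
  all: replace (1 * (1 * 1) + - (4 * 0 * (y * (y * 1)))) with 1 by ring; rewrite ?sqrt_1.
  - repeat split; lra.
  - field.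
Qed.

Lemma q_xy_lt_1 x y : 0 < y < 1 -> near_0_right (fun k => q_xy x y k < 1).
Proof.
  intros Hy.
  assert (Hcont : continuity_pt (q_xy x y) 0).
  { apply derivable_continuous_pt. exists (- y * (1 + x ^ 2 - y ^ 2) / 4).
    apply is_derive_Reals, is_derive_q_xy. }
  destruct (continuity_pt_near _ _ (y - 1) 1 Hcont) as [d [Hd Hnear]].
  { rewrite q_xy_0. lra. }
  exists d. split; [exact Hd|]. intros k Hk.
  apply Hnear. rewrite Rminus_0_r, Rabs_pos_eq; lra.
Qed.

Definition phi x y k := ellE_lin k (acos (q_xy x y k)).

Lemma phi_0 x y : phi x y 0 = acos y.
Proof. unfold phi, ellE_lin. rewrite q_xy_0. unfold Rdiv. ring. Qed.

Lemma is_derive_phi x y : 0 < y < 1 -> is_derive (phi x y) 0 (coeff1 x y).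
Proof.
  intros Hy.
  assert (Dacos : is_derive acos (q_xy x y 0) (-1 / sqrt (1 - q_xy x y 0 ^ 2)))
    by (rewrite q_xy_0; apply is_derive_acos; lra).
  unfold phi, ellE_lin. auto_derive.
  { repeat split; try (eexists; exact Dacos); eexists; apply is_derive_q_xy. }
  replace (Derive (fun k => q_xy x y k) 0) with (- y * (1 + x ^ 2 - y ^ 2) / 4)
    by (symmetry; apply is_derive_unique, is_derive_q_xy).
  replace (Derive (fun q => acos q) (q_xy x y 0)) with (-1 / sqrt (1 - q_xy x y 0 ^ 2))
    by (symmetry; apply is_derive_unique, Dacos).
  rewrite q_xy_0, cos_acos, sin_acos, Rsqr_pow2 by lra.
  unfold coeff1. set (t := sqrt (1 - y ^ 2)).
  assert (Ht : t * t = 1 - y ^ 2) by (apply sqrt_sqrt; nra).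
  assert (0 < t) by (apply sqrt_lt_R0; nra).
  replace (y ^ 2) with (1 - t * t) by lra. field. lra.
Qed.

Lemma t_kappa_xy_expansion x y : 0 < y < 1 -> forall eps, 0 < eps ->
  near_0_right (fun k => Rabs (t_kappa_xy k x y - (acos y + k * coeff1 x y)) <= eps * k).
Proof.
  intros Hy eps Heps.
  eapply near_0_right_impl.
  2: { apply near_0_right_and; [apply (q_xy_lt_1 x y Hy)|].
       apply near_0_right_and;
         [apply (is_derive_little_o _ _ (is_derive_phi x y Hy) (eps / 2)); lra|].
       apply near_0_right_lt. apply (Rmin_glb_lt 1 (eps / 8)); lra. }
  intros k Hk (Hq & Hphi & Hsmall). simpl in Hphi. rewrite phi_0 in Hphi.
  pose proof (Rmin_l 1 (eps / 8)). pose proof (Rmin_r 1 (eps / 8)).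
  rewrite t_kappa_xy_ellE by lra. unfold phi in Hphi.
  pose proof (acos_bound (q_xy x y k)). pose proof PI_4.
  set (p := acos (q_xy x y k)) in *.
  assert (Hlin := ellE_lin_error k p ltac:(lra) ltac:(lra)).
  (* p <= PI <= 4, so the O(k^2) error is at most eps / 2 * k once k < eps / 8 *)
  assert (k ^ 2 * p <= eps / 2 * k) by nra.
  replace (ellE k p - (acos y + k * coeff1 x y))
    with ((ellE k p - ellE_lin k p) + (ellE_lin k p - acos y - coeff1 x y * k)) by ring.
  eapply Rle_trans; [apply Rabs_triang|]. lra.
Qed.

(** * The limit catenoid and its Jacobi field *)

Lemma hmetric_nu_nu y : 0 < y < 1 -> hmetric y (nu y) (nu y) = 1.
Proof.
  intros Hy. unfold hmetric, nu.
  assert (H : sqrt (1 - y ^ 2) * sqrt (1 - y ^ 2) = 1 - y ^ 2) by (apply sqrt_sqrt; nra).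
  replace (- sqrt (1 - y ^ 2) * - sqrt (1 - y ^ 2)) with (1 - y ^ 2) by lra.
  field. lra.
Qed.

Lemma hmetric_normal_component x y :
  0 < y < 1 -> hmetric y (0, 0, coeff1 x y) (nu y) = w_xy x y.
Proof.
  intros Hy. unfold hmetric, nu, w_xy, coeff1.
  assert (0 < sqrt (1 - y ^ 2)) by (apply sqrt_lt_R0; nra).
  field. lra.
Qed.

Lemma exists_cos_eq_acos y :
  0 < y < 1 -> exists t, 0 < t < PI / 2 /\ cos t = y /\ acos y = t.
Proof.
  intros Hy. exists (acos y). split; [now apply acos_in_half_pi|].
  split; [apply cos_acos; lra | reflexivity].
Qed.

Lemma w_xy_cos x t : 0 < t < PI / 2 -> w_xy x (cos t) = w_xt x t.
Proof.
  intros Ht. pose proof PI_RGT_0. unfold w_xy, w_xt.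
  rewrite acos_cos by lra.
  assert (0 < sin t) by (apply sin_gt_0; lra).
  replace (1 - cos t ^ 2) with (sin t ^ 2)
    by (pose proof (sin2_cos2 t) as Hsc; unfold Rsqr in Hsc; lra).
  rewrite sqrt_pow2 by lra. ring.
Qed.

Lemma jacobi_equation_w_xt :
  exists wx wxx wt wtt : R -> R -> R, forall x t,
    derivable_pt_lim (fun s => w_xt s t) x (wx x t) /\
    derivable_pt_lim (fun s => wx s t) x (wxx x t) /\
    derivable_pt_lim (fun s => w_xt x s) t (wt x t) /\
    derivable_pt_lim (fun s => wt x s) t (wtt x t) /\
    wxx x t + wtt x t + w_xt x t = 0.
Proof.
  exists (fun x t => / 4 * (- (2 * x * cos t))), (fun x t => / 4 * (- (2 * cos t))),
    (fun x t => / 4 * (sin t + t * cos t + x ^ 2 * sin t)),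
    (fun x t => / 4 * (2 * cos t - t * sin t + x ^ 2 * cos t)).
  intros x t. unfold w_xt.
  repeat split; try (apply is_derive_Reals; auto_derive; auto; ring).
  ring.
Qed.

Lemma w_xt_shift x t : w_xt x (t - PI / 2) = w_sin x t.
Proof. unfold w_xt, w_sin. rewrite sin_minus, cos_minus, sin_PI2, cos_PI2. field. Qed.

Theorem mainTheorem8 :
  (forall x y, 0 < y < 1 ->
     forall eps, 0 < eps -> exists delta, 0 < delta /\
       forall k, 0 < k < delta ->
         Rabs (t_kappa_xy k x y - (acos y + k * coeff1 x y)) <= eps * k) /\
  (forall x y, 0 < y < 1 ->
     forall eps, 0 < eps -> exists delta, 0 < delta /\
       forall k, 0 < k < delta -> Rabs (t_kappa_xy k x y - acos y) < eps) /\
  (forall x y : R, 0 < y < 1 -> exists t, 0 < t < PI / 2 /\ cos t = y /\ acos y = t) /\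
  (forall x y, 0 < y < 1 ->
     (forall eps, 0 < eps -> exists delta, 0 < delta /\
        forall k, 0 < k < delta ->
          Rabs ((t_kappa_xy k x y - acos y) / k - coeff1 x y) < eps) /\
     hmetric y (nu y) (nu y) = 1 /\
     hmetric y (0, 0, coeff1 x y) (nu y) = w_xy x y) /\
  (forall x t, 0 < t < PI / 2 -> w_xy x (cos t) = w_xt x t) /\
  (exists wx wxx wt wtt : R -> R -> R,
     forall x t, - (PI / 2) < t < PI / 2 ->
       derivable_pt_lim (fun s => w_xt s t) x (wx x t) /\
       derivable_pt_lim (fun s => wx s t) x (wxx x t) /\
       derivable_pt_lim (fun s => w_xt x s) t (wt x t) /\
       derivable_pt_lim (fun s => wt x s) t (wtt x t) /\
       wxx x t + wtt x t + w_xt x t = 0) /\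
  (forall x t, 0 < t < PI -> w_xt x (t - PI / 2) = w_sin x t).
Proof.
  split; [exact t_kappa_xy_expansion|].
  split.
  { intros x y Hy.
    exact (first_order_limit _ _ _ (t_kappa_xy_expansion x y Hy)). }
  split; [intros _; exact exists_cos_eq_acos|].
  split.
  { intros x y Hy. split; [|split].
    - exact (first_order_quotient _ _ _ (t_kappa_xy_expansion x y Hy)).
    - now apply hmetric_nu_nu.
    - now apply hmetric_normal_component. }
  split; [exact w_xy_cos|].
  split.
  { destruct jacobi_equation_w_xt as (wx & wxx & wt & wtt & Hjac).
    exists wx, wxx, wt, wtt. intros x t _. apply Hjac. }
  intros x t _. apply w_xt_shift.
Qed.
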